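(* Let $\phi:\mathbb{R}\to\mathbb{R}$ be a differentiable elementwise nonlinearity with $\frac{\phi(z)}{\phi'(z)}<\infty$ for all $z\in\mathbb{R}$. Let $f(z)=W_1\phi(W_2 z)$ with $W_1\in\mathbb{R}^{k_0\times k}$, $W_2\in\mathbb{R}^{k\times k_0}$, and let $x\in\mathbb{R}^{k_0}$ with $\|x\|_2=1$. Initialize $W_1^{(0)}=x{u^{(0)}}^T$, $W_2^{(0)}=v^{(0)}x^T$ with $u^{(0)},v^{(0)}\in\mathbb{R}^k$ each having all entries equal, and train by gradient descent with learning rate $\gamma\to0$ on $\mathcal{L}(x,f)=\frac12\|x-f(x)\|_2^2$, yielding $W_1^{(\infty)}=xu^T$, $W_2^{(\infty)}=vx^T$ with $u_i=u_j$, $v_i=v_j$ for all $i,j$, $u_i\phi(v_i)=1/k$ and $\frac{u_i^2-{u_i^{(0)}}^2}{2}=\int_{v_i^{(0)}}^{v_i}\frac{\phi(z)}{\phi'(z)}dz$. Then for the trained network $f(z)=W_1^{(\infty)}\phi(W_2^{(\infty)}z)$, $$\lambda_1(\mathbf{J}(f(x)))=\frac{\phi'(v_i)v_i}{\phi(v_i)}$$ (for any $i\in[k]$).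
   Context: $\phi$ is applied coordinatewise. $\mathbf{J}(f(x))$ denotes the Jacobian matrix of $f$ evaluated at $x$, and $\lambda_1$ denotes its top eigenvalue (eigenvalue of largest absolute value). Gradient descent with learning rate $\gamma$ updates each weight matrix by $W\leftarrow W-\gamma\nabla_W\mathcal{L}$; the superscript $(\infty)$ denotes the weights at the end of training in the limit $\gamma\to0$ (gradient flow). *)

From HB Require Import structures.
From mathcomp Require Import all_boot all_order all_algebra.
From mathcomp Require Import all_classical all_reals all_analysis.
Set Implicit Arguments. Unset Strict Implicit. Unset Printing Implicit Defensive.
Import Order.TTheory GRing.Theory Num.Theory.
Import numFieldNormedType.Exports.
Local Open Scope classical_set_scope.
Local Open Scope ring_scope.

Definition net (R : realType) (k0 k : nat) (phi : R -> R)
  (W1 : 'M[R]_(k0, k)) (W2 : 'M[R]_(k, k0)) (z : 'cV[R]_k0) : 'cV[R]_k0 :=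
  W1 *m map_mx phi (W2 *m z).

Definition jac_matrix (R : realType) (n : nat) (F : 'cV[R]_n -> 'cV[R]_n)
  (x : 'cV[R]_n) : 'M[R]_n :=
  \matrix_(i, j) derive1 (fun t : R => F (x + t *: delta_mx j 0) i 0) 0.

(* (a + i b) is a (complex) eigenvalue of the real matrix A: there is a
   nonzero complex vector p + i q with A (p + i q) = (a + i b)(p + i q),
   written out in real and imaginary parts. *)
Definition complex_eigenvalue (R : realType) (n : nat) (A : 'M[R]_n) (a b : R) :=
  exists p q : 'cV[R]_n, (p != 0 \/ q != 0) /\
    A *m p = a *: p - b *: q /\ A *m q = b *: p + a *: q.

Definition top_eigenvalue (R : realType) (n : nat) (A : 'M[R]_n) (l : R) :=
  complex_eigenvalue A l 0 /\
  forall a b : R, complex_eigenvalue A a b -> a ^+ 2 + b ^+ 2 <= l ^+ 2.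

Definition oint (R : realType) (a b : R) (g : R -> R) : R :=
  if a <= b then Rintegral lebesgue_measure `[a, b] g
  else - Rintegral lebesgue_measure `[b, a] g.

From HB Require Import structures.
From mathcomp Require Import all_boot all_order all_algebra.
From mathcomp Require Import all_classical all_reals all_analysis.
Import Order.TTheory GRing.Theory Num.Theory.
Import numFieldNormedType.Exports.
Local Open Scope ring_scope.
From mathcomp Require Import ring lra.

(* When W1 = x u^T and W2 = v x^T with u, v constant vectors (a) and (b), the
   network is z |-> k a phi(b <x, z>) x, so its Jacobian at a unit vector x is
   k a b phi'(b) x x^T.  The balance condition k a phi(b) = 1 turns the factor
   into b phi'(b) / phi(b), and a multiple lam x x^T of the orthogonal
   projection onto x has lam as its only nonzero (complex) eigenvalue.
   Only the constancy of u, v and the balance condition are used: the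
   initialisation, the conservation law and phi' <> 0 describe how gradient
   flow reaches this point and play no further role. *)

Lemma derive1_scale_comp_affine {R : realType} (f : R -> R) (c b d t : R) :
  derivable f (b + d * t) 1 ->
  derive1 (fun s : R => c * f (b + d * s)) t = c * (d * derive1 f (b + d * t)).
Proof.
move=> df.
have daff : is_derive t 1 (fun s : R => b + d * s) d.
  have := is_deriveD (is_derive_cst b t 1) (is_deriveZ d (is_derive_id t 1)).
  by rewrite add0r /GRing.scale /= mulr1.
rewrite (derive1Ml (f := f \o (fun s => b + d * s))); last first.
  exact/derivable1_diffP/differentiable_comp/derivable1_diffP.
by rewrite derive1_comp // [derive1 _ t]derive1E derive_val [_ * d]mulrC.
Qed.

Lemma net_rank1E {R : realType} {k0 k : nat} (phi : R -> R)
    (x z : 'cV[R]_k0) (u v : 'cV[R]_k) :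
  net phi (x *m u^T) (v *m x^T) z =
  (\sum_l u l 0 * phi (v l 0 * (x^T *m z) 0 0)) *: x.
Proof.
rewrite /net -[v *m x^T *m z]mulmxA; set y := x^T *m z.
apply/matrixP => r c; rewrite ord1 [LHS]mxE [RHS]mxE big_distrl /=.
by apply: eq_bigr => l _; rewrite !mxE !big_ord1 !mxE [_ * x r 0]mulrC mulrA.
Qed.

Lemma trmx_mul_shift {R : realType} {n : nat} (x : 'cV[R]_n) (t : R) (j : 'I_n) :
  (x^T *m (x + t *: delta_mx j 0)) 0 0 = (x^T *m x) 0 0 + t * x j 0.
Proof. by rewrite mulmxDr -scalemxAr -colE !mxE mulrC. Qed.

Lemma jac_net_rank1_const {R : realType} {k0 : nat} (k : nat) (phi : R -> R)
    (x : 'cV[R]_k0) (a b s : R) :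
  x^T *m x = s%:M -> derivable phi (b * s) 1 ->
  jac_matrix (net phi (x *m (const_mx a : 'cV[R]_k)^T) (const_mx b *m x^T)) x =
  (k%:R * a * b * derive1 phi (b * s)) *: (x *m x^T).
Proof.
move=> xs dphi; apply/matrixP => r j; rewrite !mxE big_ord1 !mxE.
have -> : (fun t => net phi (x *m (const_mx a : 'cV[R]_k)^T) (const_mx b *m x^T)
                      (x + t *: delta_mx j 0) r 0)
          = (fun t => (k%:R * a * x r 0) * phi (b * s + (b * x j 0) * t)).
  apply/funext => t; rewrite net_rank1E trmx_mul_shift xs [LHS]mxE.
  under eq_bigr do rewrite !mxE eqxx mulr1n.
  rewrite sumr_const card_ord -mulr_natl.
  have -> : b * (s + t * x j 0) = b * s + b * x j 0 * t by ring.
  ring.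
by rewrite derive1_scale_comp_affine mulr0 addr0 //; ring.
Qed.

Lemma complex_mul_eq0 {R : realType} {a b p q : R} :
  p != 0 \/ q != 0 -> a * p - b * q = 0 -> b * p + a * q = 0 -> a = 0 /\ b = 0.
Proof.
move=> pq re im.
have abp : (a ^+ 2 + b ^+ 2) * p = a * (a * p - b * q) + b * (b * p + a * q).
  by ring.
have abq : (a ^+ 2 + b ^+ 2) * q = a * (b * p + a * q) - b * (a * p - b * q).
  by ring.
rewrite re im !mulr0 addr0 in abp abq; rewrite subr0 in abq.
have ab : a ^+ 2 + b ^+ 2 = 0.
  by case: pq => /negPf nz; [move/eqP: abp | move/eqP: abq];
    rewrite mulf_eq0 nz orbF => /eqP.
by split; nra.
Qed.

Lemma complex_scale_eq0 {R : realType} {n : nat} {a b : R} {p q : 'cV[R]_n} :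
  p != 0 \/ q != 0 -> a *: p - b *: q = 0 -> b *: p + a *: q = 0 -> a = 0 /\ b = 0.
Proof.
move=> pq re im.
have /existsP [r pqr] : [exists r, (p r 0 != 0) || (q r 0 != 0)].
  apply: contraT => /existsPn nz.
  have p0 : p = 0.
    by apply/matrixP => r c; rewrite ord1 mxE; have /norP [/negPn /eqP] := nz r.
  have q0 : q = 0.
    by apply/matrixP => r c; rewrite ord1 mxE; have /norP [_ /negPn /eqP] := nz r.
  by case: pq; rewrite ?p0 ?q0 eqxx.
have {}pqr : p r 0 != 0 \/ q r 0 != 0 by apply/orP.
apply: (complex_mul_eq0 pqr).
  by have /matrixP/(_ r 0) := re; rewrite !mxE.
by have /matrixP/(_ r 0) := im; rewrite !mxE.
Qed.

Lemma top_eigenvalue_scale_proj {R : realType} {n : nat} (x : 'cV[R]_n) (lam : R) :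
  x^T *m x = 1%:M -> top_eigenvalue (lam *: (x *m x^T)) lam.
Proof.
move=> xx; set A := lam *: (x *m x^T).
have Ap (p : 'cV[R]_n) : A *m p = (lam * (x^T *m p) 0 0) *: x.
  by rewrite /A -scalemxAl -mulmxA {1}[x^T *m p]mx11_scalar mul_mx_scalar scalerA.
have xAp (p : 'cV[R]_n) : (x^T *m (A *m p)) 0 0 = lam * (x^T *m p) 0 0.
  by rewrite Ap -scalemxAr xx !mxE eqxx mulr1.
split.
  exists x, 0; split; last first.
    by rewrite Ap xx mxE eqxx mulr1 mulmx0 !scale0r scaler0 subr0 addr0.
  left; apply/eqP => x0; move/matrixP/(_ 0 0): xx.
  by rewrite x0 trmx0 mul0mx !mxE eqxx => /eqP; rewrite eq_sym oner_eq0.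
move=> a b [p [q [pq [Ep Eq]]]].
set al := (x^T *m p) 0 0; set be := (x^T *m q) 0 0.
have Fp : a * al - b * be = lam * al.
  by rewrite /al /be -xAp Ep mulmxBr -!scalemxAr !mxE.
have Fq : b * al + a * be = lam * be.
  by rewrite /al /be -xAp Eq mulmxDr -!scalemxAr !mxE.
(* Projected onto x, the eigen-equation reads (a + ib)(al + i be) = lam (al + i be);
   if the projection vanishes, A kills p and q, forcing a + ib = 0. *)
have [/orP albe | ] := boolP ((al != 0) || (be != 0)).
  have re : (a - lam) * al - b * be = 0 by rewrite mulrBl -Fp; ring.
  have im : b * al + (a - lam) * be = 0 by rewrite mulrBl -Fq; ring.
  have [/eqP alam ->] := complex_mul_eq0 albe re im.
  by rewrite subr_eq0 in alam; rewrite (eqP alam) expr0n addr0.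
rewrite negb_or => /andP [/negPn /eqP al0 /negPn /eqP be0].
have re : a *: p - b *: q = 0 by rewrite -Ep Ap -/al al0 mulr0 scale0r.
have im : b *: p + a *: q = 0 by rewrite -Eq Ap -/be be0 mulr0 scale0r.
have [-> ->] := complex_scale_eq0 pq re im.
by rewrite expr0n addr0 sqr_ge0.
Qed.

Theorem theorem2 (R : realType) (k0 k : nat) (phi : R -> R)
  (phi_diff : forall z : R, derivable phi z 1)
  (phi_ratio : forall z : R, (derive1 phi) z != 0)
  (x : 'cV[R]_k0) (x_unit : \sum_(j < k0) x j 0 ^+ 2 = 1)
  (u0 v0 u v : 'cV[R]_k)
  (u0_const : forall i j : 'I_k, u0 i 0 = u0 j 0)
  (v0_const : forall i j : 'I_k, v0 i 0 = v0 j 0)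
  (u_const : forall i j : 'I_k, u i 0 = u j 0)
  (v_const : forall i j : 'I_k, v i 0 = v j 0)
  (balance : forall i : 'I_k, u i 0 * phi (v i 0) = k%:R^-1)
  (conserved : forall i : 'I_k,
     (u i 0 ^+ 2 - u0 i 0 ^+ 2) / 2 =
     oint (v0 i 0) (v i 0) (fun z => phi z / (derive1 phi) z)) :
  forall i : 'I_k,
    top_eigenvalue
      (jac_matrix (net phi (x *m u^T) (v *m x^T)) x)
      ((derive1 phi) (v i 0) * v i 0 / phi (v i 0)).
Proof.
move=> i; set a := u i 0; set b := v i 0.
have uE : u = const_mx a by apply/matrixP => l c; rewrite ord1 mxE; apply: u_const.
have vE : v = const_mx b by apply/matrixP => l c; rewrite ord1 mxE; apply: v_const.
have xx : x^T *m x = 1%:M.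
  apply/matrixP => ? ?; rewrite !ord1 !mxE -x_unit.
  by apply: eq_bigr => j _; rewrite !mxE expr2.
have kn0 : k%:R != 0 :> R.
  by rewrite pnatr_eq0 -lt0n (leq_ltn_trans (leq0n i) (ltn_ord i)).
have phib : phi b != 0.
  apply/eqP => phi0; have /eqP := balance i.
  by rewrite -/a -/b phi0 mulr0 eq_sym invr_eq0 (negbTE kn0).
have ka : k%:R * a = (phi b)^-1.
  by rewrite -[a](mulfK phib) (balance i) mulrA divff // mul1r.
rewrite uE vE (jac_net_rank1_const _ _ _ _ _ _ xx) ?mulr1 // ka.
have -> : (phi b)^-1 * b * derive1 phi b = derive1 phi b * b / phi b by ring.
exact: top_eigenvalue_scale_proj.
Qed.
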